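(* Fix $m\ge1$ and $i_1,\dots,i_m\in\{1,\dots,n\}$. For every integer $k\ge0$ and $r\in\{0,1\}$, $$\operatorname{ad}(X)^{2k+r}\big([x^m;i_1,\dots,i_m]\big)=(-1)^k\,k!\,\Big(\tfrac{\sqrt{-1}}{\sqrt2}\Big)^r\sum_{t=0}^{k}[\eta^tx^{m-k-t-r}\gamma^r\partial^{k-t};i_1,\dotsc,i_m],$$ where $[x^m;i_1,\dots,i_m]=x^{i_1}\cdots x^{i_m}$.
   Context: Fix $n\ge1$ and an invertible complex matrix $\eta=(\eta^{ij})$ with $\eta^{ij}=\eta^{ji}$. $W(2n|n)$ is the associative superalgebra generated by even $x^1,\dots,x^n,\partial_1,\dots,\partial_n$ and odd $\gamma^1,\dots,\gamma^n$ with relations $x^ix^j=x^jx^i$, $\partial_i\partial_j=\partial_j\partial_i$, $\partial_ix^j-x^j\partial_i=\delta_i^j$, $\gamma^i$ commuting with all $x^j,\partial_j$, $\gamma^i\gamma^j+\gamma^j\gamma^i=2\eta^{ij}$; $\partial^i:=\eta^{ij}\partial_j$ (summed). $X=\frac{\sqrt{-1}}{\sqrt2}\gamma^i\partial_i$, $\operatorname{ad}(X)(b)=Xb-(-1)^{|b|}bX$. Bracket symbol: for integers $a,p,q,t$ with $a,q,t\ge0$ and $2a+p+q+t=m$, and indices $i_1,\dots,i_m$, if $p<0$ the symbol $[\eta^ax^p\gamma^q\partial^t;i_1,\dots,i_m]$ is $0$; otherwise, for $\sigma\in S_m$ put $T_\sigma:=\prod_{l=0}^{a-1}\eta^{i_{\sigma(2l+1)}i_{\sigma(2l+2)}}\cdot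 x^{i_{\sigma(2a+1)}}\cdots x^{i_{\sigma(2a+p)}}\cdot\gamma^{i_{\sigma(2a+p+1)}}\cdots\gamma^{i_{\sigma(2a+p+q)}}\cdot\partial^{i_{\sigma(2a+p+q+1)}}\cdots\partial^{i_{\sigma(m)}}$ and $[\eta^ax^p\gamma^q\partial^t;i_1,\dots,i_m]:=\frac1{2^aa!p!t!}\sum_{\sigma\in S_m}T_\sigma$ (factors with exponent $0$ omitted). *)

From HB Require Import structures.
From mathcomp Require Import all_boot all_order all_algebra.
From mathcomp Require Import fingroup perm.
Set Implicit Arguments. Unset Strict Implicit. Unset Printing Implicit Defensive.
Import Order.TTheory GRing.Theory Num.Theory.
Local Open Scope ring_scope.

Section WeylClifford.
Variables (C : numClosedFieldType) (A : algType C) (n : nat).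
Variables (eta : 'M[C]_n) (x d g : 'I_n -> A).

(* The defining relations of W(2n|n) for the images x^i, partial_i, gamma^i
   in an associative C-algebra A. *)
Definition WC_relations : Prop :=
  [/\ (forall i j, x i * x j = x j * x i),
      (forall i j, d i * d j = d j * d i),
      (forall i j, d i * x j - x j * d i = (i == j)%:R),
      (forall i j, g i * x j = x j * g i) &
      (forall i j, g i * d j = d j * g i) ] /\
  (forall i j, g i * g j + g j * g i = (2 * eta i j)%:A).

Definition dup (i : 'I_n) : A := \sum_(j < n) eta i j *: d j.

Definition cX : C := 'i / sqrtC 2.

Definition Xop : A := cX *: \sum_(i < n) g i * d i.

(* ad(X)(b) = X b - (-1)^{|b|} b X, for b homogeneous of parity pb *)
Definition adX (pb : bool) (b : A) : A := Xop * b - (-1) ^+ pb * b * Xop.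

(* ad(X)^j applied to a homogeneous b of parity p; since X is odd,
   ad(X)^j' b has parity p (+) odd j'. *)
Fixpoint adXn (j : nat) (p : bool) (b : A) : A :=
  match j with
  | 0 => b
  | j'.+1 => adX (p (+) odd j') (adXn j' p b)
  end.

Fixpoint eta_pairs (w : seq 'I_n) : C :=
  match w with
  | a :: b :: r => eta a b * eta_pairs r
  | _ => 1
  end.

(* T_sigma for the word w = (i_{sigma(1)}, ..., i_{sigma(m)}) *)
Definition Tword (a p q t : nat) (w : seq 'I_n) : A :=
  eta_pairs (take (2 * a) w) *:
  ((\prod_(j <- take p (drop (2 * a) w)) x j) *
   (\prod_(j <- take q (drop (2 * a + p) w)) g j) *
   (\prod_(j <- take t (drop (2 * a + p + q) w)) dup j)).

(* The bracket symbol [eta^a x^p gamma^q partial^t ; i_1, ..., i_m]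
   (meant for 2a+p+q+t = m); it is 0 when p < 0. *)
Definition bracket (m a : nat) (p : int) (q t : nat) (i : 'I_m -> 'I_n) : A :=
  match p with
  | Negz _ => 0
  | Posz p' =>
      ((2 ^ a * a`! * p'`! * t`!)%N%:R)^-1 *:
      \sum_(s : 'S_m) Tword a p' q t [seq i (s l) | l <- enum 'I_m]
  end.

End WeylClifford.

From HB Require Import structures.
From mathcomp Require Import all_boot all_order all_algebra.
From mathcomp Require Import fingroup perm.
From mathcomp Require Import zify ring.
Import Order.TTheory GRing.Theory Num.Theory.
Set Implicit Arguments. Unset Strict Implicit. Unset Printing Implicit Defensive.

(** Induction on [m], splitting off the first factor [x^(i_1)].  Put
    [c = √-1/√2], so that [2c² = -1].  From [[X, x^h] = c γ^h], [[X, ∂^h] = 0]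
    and [X γ^h + γ^h X = 2c ∂^h] one gets
      ad(X)^N (x^h u) = x^h ad(X)^N u + [N odd] c γ^h ad(X)^(N-1) u
                        - ⌊N/2⌋ ∂^h ad(X)^(N-2) u.
    On the other side, sorting the permutations in [[η^a x^p γ^q ∂^t; i_1, ...]]
    by the slot that receives [i_1] (in an η-pair, an x, the γ or a ∂) expands
    the bracket into brackets on [i_2, ..., i_m]; together with
      ∂^h [η^a x^p γ^q ∂^t; i] = [η^a x^p γ^q ∂^t; i] ∂^h
                                 + Σ_l η^(h i_l) [η^a x^(p-1) γ^q ∂^t; i without i_l]
    this shows that the right-hand side obeys the same recursion, the
    coefficients (-1)^k k! c^r matching because [2c² = -1]. *)

(** * Inserting into and deleting from sequences *)

Definition ins T (j : nat) (h : T) (v : seq T) := take j v ++ h :: drop j v.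
Definition del T (j : nat) (v : seq T) := take j v ++ drop j.+1 v.

Section InsertDelete.
Variable T : Type.
Implicit Types (v : seq T) (h y : T).

Lemma ins0 h v : ins 0 h v = h :: v.
Proof. by rewrite /ins take0 drop0. Qed.

Lemma insS j h y v : ins j.+1 h (y :: v) = y :: ins j h v.
Proof. by []. Qed.

Lemma del0 y v : del 0 (y :: v) = v.
Proof. by rewrite /del /= drop0. Qed.

Lemma delS j y v : del j.+1 (y :: v) = y :: del j v.
Proof. by []. Qed.

Lemma size_ins j h v : (j <= size v) -> size (ins j h v) = (size v).+1.
Proof. by move=> jv; rewrite /ins size_cat /= size_take size_drop; case: ltnP jv; lia. Qed.

Lemma nth_ins x0 j h v k : (j <= size v) ->
  nth x0 (ins j h v) k =
  if (k < j) then nth x0 v k else if k == j then h else nth x0 v k.-1.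
Proof.
elim: j v k => [|j IH] [|y v] [|k] jv; rewrite ?ins0 ?insS //= IH //.
by rewrite ltnS eqSS; case: k => [|k] //; case: j {IH jv}.
Qed.

Lemma del_ins j h v : (j <= size v) -> del j (ins j h v) = v.
Proof.
elim: j v => [|j IH] [|y v] // jv; rewrite ?ins0 ?del0 //.
by rewrite insS delS IH.
Qed.

Lemma take_ins_le k j h v : (k <= j) -> (j <= size v) ->
  take k (ins j h v) = take k v.
Proof.
elim: j k v => [|j IH] [|k] [|y v] // kj jv; rewrite ?take0 //.
by rewrite insS /= IH.
Qed.

Lemma drop_ins_le k j h v : (k <= j) -> (j <= size v) ->
  drop k (ins j h v) = ins (j - k) h (drop k v).
Proof.
elim: j k v => [|j IH] [|k] [|y v] // kj jv; rewrite ?drop0 ?subn0 //.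
by rewrite insS subSS -IH.
Qed.

Lemma take_ins_gt k j h v : (j < k) -> (j <= size v) ->
  take k (ins j h v) = ins j h (take k.-1 v).
Proof.
elim: j k v => [|j IH] [|k] [|y v] // kj jv; rewrite ?ins0 //.
by rewrite insS /= IH //; case: k kj.
Qed.

Lemma drop_ins_gt k j h v : (j < k) -> (j <= size v) ->
  drop k (ins j h v) = drop k.-1 v.
Proof.
elim: j k v => [|j IH] [|k] [|y v] // kj jv; rewrite ?ins0 //.
by rewrite insS /= IH //; case: k kj.
Qed.

Lemma take_del_le k j v : (k <= j) -> take k (del j v) = take k v.
Proof.
elim: j k v => [|j IH] [|k] [|y v] // kj; rewrite ?take0 //.
by rewrite delS /= IH.
Qed.

Lemma drop_del_le k j v : (k <= j) -> (j < size v) ->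
  drop k (del j v) = del (j - k) (drop k v).
Proof.
elim: j k v => [|j IH] [|k] [|y v] // kj jv; rewrite ?drop0 ?subn0 //.
by rewrite delS /= IH.
Qed.

Lemma take_del_gt k j v : (j < k) -> (j < size v) ->
  take k.-1 (del j v) = del j (take k v).
Proof.
elim: j k v => [|j IH] [|[|k]] [|y v] // kj jv; rewrite ?del0 //.
by rewrite delS /= delS -IH.
Qed.

Lemma drop_del_ge k j v : (j <= k) -> (j < size v) ->
  drop k (del j v) = drop k.+1 v.
Proof.
elim: j k v => [|j IH] [|k] [|y v] // kj jv; rewrite ?del0 ?delS /= ?drop0 //.
exact: IH.
Qed.

End InsertDelete.

(** * Sums over permutations *)

Definition word T m (i : 'I_m -> T) (s : 'S_m) := [seq i (s l) | l <- enum 'I_m].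

Section PermutedWords.
Variable T : Type.

Lemma size_word m (i : 'I_m -> T) s : size (word i s) = m.
Proof. by rewrite size_map size_enum_ord. Qed.

Lemma nth_word m (i : 'I_m -> T) s x0 (k : 'I_m) : nth x0 (word i s) k = i (s k).
Proof. by rewrite (nth_map k) ?size_enum_ord // nth_ord_enum. Qed.

Lemma word_lift_perm m (i : 'I_m.+1 -> T) (e l : 'I_m.+1) (s : 'S_m) :
  word i (lift_perm e l s) = ins e (i l) (word (fun k => i (lift l k)) s).
Proof.
have em : (e <= size (word (fun k => i (lift l k)) s)) by rewrite size_word -ltnS.
apply: (@eq_from_nth _ (i l)); first by rewrite size_ins // !size_word.
rewrite size_word => k km; rewrite -[k]/(nat_of_ord (Ordinal km)) nth_word nth_ins //.
case: (unliftP e (Ordinal km)) => [k'|] ->; last by rewrite lift_perm_id ltnn eqxx.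
rewrite lift_perm_lift /= /bump; have [ek|ke] := leqP e k'.
  by rewrite /= add1n ltnNge (leqW ek) gtn_eqF //= nth_word.
by rewrite /= add0n ke nth_word.
Qed.

End PermutedWords.

Section PermutationSums.

Variable m : nat.
Implicit Types (e l : 'I_m.+1) (s : 'S_m.+1).

Definition unlift_perm_fun e s (k : 'I_m) := odflt k (unlift (s e) (s (lift e k))).

Lemma lift_unlift_perm_fun e s k : lift (s e) (unlift_perm_fun e s k) = s (lift e k).
Proof.
have : s e != s (lift e k) by rewrite (inj_eq perm_inj) neq_lift.
by case/unlift_some => k' E _; rewrite /unlift_perm_fun E liftK.
Qed.

Lemma unlift_perm_fun_inj e s : injective (unlift_perm_fun e s).
Proof.
move=> k1 k2 /(congr1 (lift (s e))).
by rewrite !lift_unlift_perm_fun => /perm_inj /lift_inj.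
Qed.

Definition unlift_perm e s : 'S_m := perm (@unlift_perm_fun_inj e s).

Lemma unlift_permK e l : cancel (lift_perm e l) (unlift_perm e).
Proof.
move=> s; apply/permP => k.
by rewrite permE /unlift_perm_fun lift_perm_id lift_perm_lift liftK.
Qed.

Lemma unlift_permKV e s : lift_perm e (s e) (unlift_perm e s) = s.
Proof.
apply/permP => k; case: (unliftP e k) => [k'|] ->; last by rewrite lift_perm_id.
by rewrite lift_perm_lift permE lift_unlift_perm_fun.
Qed.

Variables (R : Type) (idx : R) (op : Monoid.com_law idx).

Lemma big_perm_fiber e l (F : 'S_m.+1 -> R) :
  \big[op/idx]_(s : 'S_m.+1 | s e == l) F s = \big[op/idx]_(s : 'S_m) F (lift_perm e l s).
Proof.
rewrite (reindex (lift_perm e l)) /=; last first.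
  by exists (unlift_perm e) => [s _ | s /eqP <-]; rewrite ?unlift_permK ?unlift_permKV.
by apply: eq_bigl => s; rewrite lift_perm_id eqxx.
Qed.

Lemma big_perm_lift_value e (F : 'S_m.+1 -> R) :
  \big[op/idx]_(s : 'S_m.+1) F s = \big[op/idx]_l \big[op/idx]_(s : 'S_m) F (lift_perm e l s).
Proof.
rewrite (partition_big (fun s : 'S_m.+1 => s e) predT) //.
by apply: eq_bigr => l _; rewrite big_perm_fiber.
Qed.

Lemma big_perm_lift_position l (F : 'S_m.+1 -> R) :
  \big[op/idx]_(s : 'S_m.+1) F s = \big[op/idx]_e \big[op/idx]_(s : 'S_m) F (lift_perm e l s).
Proof.
rewrite (partition_big (fun s : 'S_m.+1 => (s^-1)%g l) predT) //.
apply: eq_bigr => e _; rewrite -big_perm_fiber; apply: eq_bigl => s.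
by apply/eqP/eqP => <-; rewrite ?permK ?permKV.
Qed.

End PermutationSums.

Section WordSums.
Variables (R : Type) (idx : R) (op : Monoid.com_law idx) (T : Type).

Lemma big_word_del m (i : 'I_m -> T) e (em : e < m) x0 (F : T -> seq T -> R) :
  \big[op/idx]_(s : 'S_m) F (nth x0 (word i s) e) (del e (word i s)) =
  \big[op/idx]_(l < m) \big[op/idx]_(s : 'S_m.-1)
     F (i l) (word (fun k => i (lift l k)) s).
Proof.
case: m i em => [|m] i em //.
rewrite (big_perm_lift_value _ (Ordinal em)); apply: eq_bigr => l _; apply: eq_bigr => s _.
by rewrite word_lift_perm /= nth_ins ?size_word // ltnn eqxx del_ins ?size_word.
Qed.

Lemma big_word_ins m (i : 'I_m.+1 -> T) (F : seq T -> R) :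
  \big[op/idx]_(s : 'S_m.+1) F (word i s) =
  \big[op/idx]_(0 <= e < m.+1) \big[op/idx]_(s : 'S_m)
     F (ins e (i ord0) (word (fun k => i (lift ord0 k)) s)).
Proof.
rewrite (big_perm_lift_position _ ord0) big_mkord.
by apply: eq_bigr => e _; apply: eq_bigr => s _; rewrite word_lift_perm.
Qed.

End WordSums.

(** * Words and brackets in the Weyl-Clifford algebra *)

Local Open Scope ring_scope.

Lemma prodr_ins (R : pzSemiRingType) I (f : I -> R) e h (s : seq I) :
  (forall i j, GRing.comm (f i) (f j)) ->
  \prod_(j <- ins e h s) f j = f h * \prod_(j <- s) f j.
Proof.
move=> fC; rewrite /ins big_cat /= big_cons mulrA -(commr_prod _ (fun j _ => fC h j)).
by rewrite -mulrA -big_cat cat_take_drop.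
Qed.

Lemma invr_natM_mul (F : numFieldType) u v :
  (0 < u)%N -> ((u * v)%N%:R : F)^-1 * u%:R = v%:R^-1.
Proof. by move=> u0; rewrite natrM invfM mulrAC mulVf ?mul1r // pnatr_eq0 -lt0n. Qed.

Definition bracket_coef (F : numFieldType) a p t : F := ((2 ^ a * a`! * p`! * t`!)%N%:R)^-1.

Section BracketCoef.
Variable F : numFieldType.
Local Notation c := (bracket_coef F).

Lemma bracket_coefSa a p t : c a.+1 p t * (2 * a.+1)%:R = c a p t.
Proof.
rewrite /bracket_coef; symmetry; rewrite -(@invr_natM_mul F (2 * a.+1)) ?muln_gt0 //.
by congr (_%:R^-1 * _); rewrite factS expnS; ring.
Qed.

Lemma bracket_coefSp a p t : c a p.+1 t * p.+1%:R = c a p t.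
Proof.
rewrite /bracket_coef; symmetry; rewrite -(@invr_natM_mul F p.+1) //.
by congr (_%:R^-1 * _); rewrite factS; ring.
Qed.

Lemma bracket_coefSt a p t : c a p t.+1 * t.+1%:R = c a p t.
Proof.
rewrite /bracket_coef; symmetry; rewrite -(@invr_natM_mul F t.+1) //.
by congr (_%:R^-1 * _); rewrite factS; ring.
Qed.

End BracketCoef.

Lemma mul2_cX_sqr (C : numClosedFieldType) : 2 * cX C ^+ 2 = -1.
Proof. by rewrite /cX expr_div_n sqrCi sqrtCK mulN1r mulrN mulfV ?pnatr_eq0. Qed.

Section WeylClifford.
Variables (C : numClosedFieldType) (A : algType C) (n : nat).
Variables (eta : 'M[C]_n) (x d g : 'I_n -> A).
Hypothesis eta_sym : forall i j, eta i j = eta j i.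
Hypothesis x_comm : forall i j, x i * x j = x j * x i.
Hypothesis d_comm : forall i j, d i * d j = d j * d i.
Hypothesis dx_comm : forall i j, d i * x j - x j * d i = (i == j)%:R.
Hypothesis gx_comm : forall i j, g i * x j = x j * g i.
Hypothesis gd_comm : forall i j, g i * d j = d j * g i.
Hypothesis gg_anticomm : forall i j, g i * g j + g j * g i = (2 * eta i j)%:A.

Local Notation D := (dup eta d).
Local Notation T := (Tword eta x d g).

Lemma dup_comm i j : D i * D j = D j * D i.
Proof.
rewrite /dup mulr_suml [RHS]mulr_suml; under eq_bigr do rewrite mulr_sumr.
rewrite exchange_big; apply: eq_bigr => k _; rewrite mulr_sumr; apply: eq_bigr => l _.
by rewrite -!scalerAl -!scalerAr d_comm !scalerA mulrC.
Qed.

Lemma dup_g_comm i j : D i * g j = g j * D i.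
Proof.
rewrite /dup mulr_suml mulr_sumr; apply: eq_bigr => k _.
by rewrite -scalerAl -scalerAr gd_comm.
Qed.

Lemma dup_x_comm i h : D i * x h = x h * D i + (eta i h)%:A.
Proof.
have -> : (eta i h)%:A = \sum_(k < n) eta i k *: ((k == h)%:R : A).
  by rewrite (bigD1 h) //= eqxx big1 ?addr0 // => k /negPf ->; rewrite scaler0.
rewrite /dup mulr_suml mulr_sumr -big_split; apply: eq_bigr => k _ /=.
by rewrite -scalerAl -scalerAr -scalerDr -dx_comm addrC subrK.
Qed.

Lemma dup_prod_x j s :
  D j * \prod_(k <- s) x k = \prod_(k <- s) x k * D j +
    \sum_(e < size s) eta j (nth j s e) *: \prod_(k <- del e s) x k.
Proof.
elim: s => [|a s IH]; first by rewrite !big_nil big_ord0 mul1r mulr1 addr0.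
rewrite big_cons mulrA dup_x_comm mulrDl -mulrA IH mulrDr mulrA big_ord_recl.
rewrite del0 mulr_algl -addrA; congr (_ + _); rewrite addrC; congr (_ + _).
by rewrite mulr_sumr; apply: eq_bigr => e _; rewrite lift0 delS big_cons scalerAr.
Qed.

Lemma Tword_ins_x a p q t j h v :
  (2 * a <= j < 2 * a + p)%N -> (j <= size v)%N ->
  T a p q t (ins j h v) = x h * T a p.-1 q t v.
Proof.
move=> /andP[aj jp] jv; rewrite /Tword take_ins_le // drop_ins_le //.
rewrite take_ins_gt ?size_drop; try lia.
rewrite (drop_ins_gt (k := (2 * a + p)%N)) ?(drop_ins_gt (k := (2 * a + p + q)%N)); try lia.
rewrite prodr_ins // -scalerAr !mulrA.
have -> : ((2 * a + p).-1 = 2 * a + p.-1)%N by lia.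
by have -> : ((2 * a + p + q).-1 = 2 * a + p.-1 + q)%N by lia.
Qed.

Lemma Tword_ins_g a p t h v : (2 * a + p <= size v)%N ->
  T a p 1 t (ins (2 * a + p) h v) = g h * T a p 0 t v.
Proof.
move=> pv; rewrite /Tword take_ins_le ?(drop_ins_le (k := (2 * a)%N)); try lia.
rewrite addKn take_ins_le ?size_drop; try lia.
rewrite (drop_ins_le (k := (2 * a + p)%N)) // subnn ins0.
rewrite (drop_ins_gt (k := (2 * a + p + 1)%N)); try lia.
rewrite addn1 addn0 /= big_cons take0 big_nil -scalerAr !mulrA !mulr1.
by rewrite (commr_prod _ (fun j _ => gx_comm h j)).
Qed.

Lemma Tword_ins_dup a p q t j h v :
  (2 * a + p + q <= j < 2 * a + p + q + t)%N -> (j <= size v)%N ->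
  T a p q t (ins j h v) = T a p q t.-1 v * D h.
Proof.
move=> /andP[qj jt] jv; rewrite /Tword take_ins_le ?(drop_ins_le (k := (2 * a)%N)); try lia.
rewrite take_ins_le ?size_drop ?(drop_ins_le (k := (2 * a + p)%N)); try lia.
rewrite take_ins_le ?size_drop ?(drop_ins_le (k := (2 * a + p + q)%N)); try lia.
rewrite take_ins_gt ?size_drop; try lia.
rewrite prodr_ins; last exact: dup_comm.
by rewrite (commr_prod _ (fun j _ => dup_comm h j)) -scalerAl !mulrA.
Qed.

Lemma eta_pairs_cons2 i j u : eta_pairs eta [:: i, j & u] = eta i j * eta_pairs eta u.
Proof. by []. Qed.

Lemma eta_pairs_ins (b : bool) k h u : (k.*2 + b <= size u)%N -> odd (size u) ->
  eta_pairs eta (ins (k.*2 + b) h u) =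
  eta h (nth h u k.*2) * eta_pairs eta (del k.*2 u).
Proof.
elim: k u => [|k IH] [|u0 [|u1 u]] // ku odd_u; rewrite ?double0 ?doubleS.
- by case: b {ku}; rewrite add0n ?insS ins0 del0 /= // eta_sym.
- by case: b {ku}; rewrite add0n ?insS ins0 del0 /= // eta_sym.
rewrite 2!addSn 2!insS 2!delS !eta_pairs_cons2 IH.
- by rewrite mulrCA.
- by move: ku; rewrite /= !addSn !ltnS.
by move: odd_u => /=; rewrite negbK.
Qed.

Lemma Tword_ins_eta a p q t j h v : (j < 2 * a)%N -> (2 * a <= (size v).+1)%N ->
  T a p q t (ins j h v) = eta h (nth h v j./2.*2) *: T a.-1 p q t (del j./2.*2 v).
Proof.
case: a => [|a] // ja av; rewrite /=.
have jE : j = (j./2.*2 + odd j)%N by rewrite addnC odd_double_half.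
have jlt : (j./2.*2 < (2 * a).+1)%N by lia.
rewrite /Tword (take_ins_gt (k := (2 * a.+1)%N)); try lia.
rewrite [in ins j _ _]jE eta_pairs_ins; first last.
- by rewrite size_takel /= ?oddM; lia.
- by rewrite size_takel; lia.
rewrite nth_take; last lia.
rewrite -take_del_gt ?drop_ins_gt ?drop_del_ge; try lia.
have -> : ((2 * a.+1).-2 = 2 * a)%N by lia.
have -> : ((2 * a.+1).-1 = (2 * a).+1)%N by lia.
have -> : ((2 * a.+1 + p).-1 = (2 * a + p).+1)%N by lia.
have -> : ((2 * a.+1 + p + q).-1 = (2 * a + p + q).+1)%N by lia.
by rewrite -scalerA.
Qed.

Lemma dup_mul_Tword a p q t j w : (2 * a + p <= size w)%N ->
  D j * T a p q t w = T a p q t w * D j +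
  \sum_(e < p) eta j (nth j w (2 * a + e)) *: T a p.-1 q t (del (2 * a + e) w).
Proof.
move=> pw; rewrite /Tword -scalerAr !mulrA dup_prod_x size_takel ?size_drop; last lia.
rewrite !mulrDl scalerDr; congr (_ + _).
  rewrite -scalerAl -!mulrA; congr (_ *: (_ * _)).
  rewrite mulrA (commr_prod _ (fun k _ => dup_g_comm j k)) -mulrA.
  by rewrite (commr_prod _ (fun k _ => dup_comm j k)).
rewrite !mulr_suml scaler_sumr; apply: eq_bigr => e _; have ep := ltn_ord e.
rewrite take_del_le ?(drop_del_le (k := (2 * a)%N)) ?addKn; try lia.
rewrite (drop_del_ge (k := (2 * a + p.-1)%N)); try lia.
rewrite (drop_del_ge (k := (2 * a + p.-1 + q)%N)); try lia.
rewrite (take_del_gt (k := p)) ?size_drop; try lia.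
have -> : ((2 * a + p.-1).+1 = 2 * a + p)%N by lia.
have -> : ((2 * a + p.-1 + q).+1 = 2 * a + p + q)%N by lia.
by rewrite -!scalerAl !scalerA mulrC nth_take // nth_drop.
Qed.

Definition Tsum m a p q t (i : 'I_m -> 'I_n) : A := \sum_(s : 'S_m) T a p q t (word i s).

Lemma Tsum_ins_eta m a p q t (i : 'I_m -> 'I_n) h e :
  (e < 2 * a)%N -> (2 * a <= m.+1)%N ->
  \sum_(s : 'S_m) T a p q t (ins e h (word i s)) =
  \sum_(l < m) eta h (i l) *: Tsum a.-1 p q t (fun k => i (lift l k)).
Proof.
move=> ea am; have eE := odd_double_half e; have odd_e := leq_b1 (odd e).
under eq_bigr do rewrite Tword_ins_eta ?size_word //.
have em : (e./2.*2 < m)%N by lia.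
rewrite (big_word_del _ i em h (fun y w => eta h y *: T a.-1 p q t w)).
by apply: eq_bigr => l _; rewrite scaler_sumr.
Qed.

Lemma Tsum_rec m a p q t (i : 'I_m.+1 -> 'I_n) :
  (2 * a + p + q + t = m.+1)%N -> (q <= 1)%N ->
  Tsum a p q t i =
  p%:R *: (x (i ord0) * Tsum a p.-1 q t (fun k => i (lift ord0 k))) +
  q%:R *: (g (i ord0) * Tsum a p 0 t (fun k => i (lift ord0 k))) +
  t%:R *: (Tsum a p q t.-1 (fun k => i (lift ord0 k)) * D (i ord0)) +
  (2 * a)%:R *: \sum_(l < m) eta (i ord0) (i (lift ord0 l)) *:
      Tsum a.-1 p q t (fun k => i (lift ord0 (lift l k))).
Proof.
move=> m_sum q1; set h := i ord0; set i' := fun k => i (lift ord0 k).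
have sw s : size (word i' s) = m by rewrite size_word.
rewrite /Tsum big_word_ins (big_cat_nat _ (n := (2 * a)%N)) //=; last lia.
rewrite (big_cat_nat _ (m := (2 * a)%N) (n := (2 * a + p)%N)) //=; try lia.
rewrite (big_cat_nat _ (m := (2 * a + p)%N) (n := (2 * a + p + q)%N)) //=; try lia.
rewrite [in RHS]addrC !addrA; congr (_ + _ + _ + _).
- rewrite (eq_big_nat _ _ (F2 := fun=> \sum_(l < m) eta h (i' l) *:
      Tsum a.-1 p q t (fun k => i' (lift l k)))).
    by rewrite sumr_const_nat subn0 scaler_nat.
  by move=> e /andP[_ ea]; apply: Tsum_ins_eta; lia.
- rewrite (eq_big_nat _ _ (F2 := fun=> x h * Tsum a p.-1 q t i')).
    by rewrite sumr_const_nat scaler_nat addKn.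
  move=> e ep; rewrite /Tsum mulr_sumr; apply: eq_bigr => s _.
  by rewrite Tword_ins_x ?sw //; lia.
- case: q q1 m_sum => [|[|]] // _ m_sum; first by rewrite addn0 big_geq ?scale0r.
  rewrite addn1 big_nat1 scale1r /Tsum mulr_sumr; apply: eq_bigr => s _.
  by rewrite Tword_ins_g ?sw //; lia.
rewrite (eq_big_nat _ _ (F2 := fun=> Tsum a p q t.-1 i' * D h)).
  by rewrite sumr_const_nat scaler_nat; congr (_ *+ _); lia.
move=> e /andP[qe et]; rewrite /Tsum mulr_suml; apply: eq_bigr => s _.
by rewrite Tword_ins_dup ?sw //; lia.
Qed.

Lemma dup_mul_Tsum m a p q t (i : 'I_m -> 'I_n) j : (2 * a + p <= m)%N ->
  D j * Tsum a p q t i = Tsum a p q t i * D j +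
  p%:R *: \sum_(l < m) eta j (i l) *: Tsum a p.-1 q t (fun k => i (lift l k)).
Proof.
move=> pm; rewrite /Tsum mulr_sumr mulr_suml.
under eq_bigr do rewrite dup_mul_Tword ?size_word //.
rewrite big_split /= exchange_big /= scaler_nat -[p in _ *+ p]card_ord -sumr_const.
congr (_ + _).
apply: eq_bigr => e _; have em : (2 * a + e < m)%N by have := ltn_ord e; lia.
rewrite (big_word_del _ i em j (fun y w => eta j y *: T a p.-1 q t w)).
by apply: eq_bigr => l _; rewrite scaler_sumr.
Qed.

Local Notation B := (bracket eta x d g).

Lemma bracketE m a p q t (i : 'I_m -> 'I_n) :
  B a (Posz p) q t i = bracket_coef C a p t *: Tsum a p q t i.
Proof. by []. Qed.

Lemma bracketN m a p q t (i : 'I_m -> 'I_n) : B a (Negz p) q t i = 0.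
Proof. by []. Qed.

Lemma dup_mul_bracket m a (P : int) q t (i : 'I_m -> 'I_n) j :
  P + (2 * a + q + t)%N = m ->
  D j * B a P q t i = B a P q t i * D j +
  \sum_(l < m) eta j (i l) *: B a (P - 1) q t (fun k => i (lift l k)).
Proof.
case: P => [p|p] Pm; last first.
  rewrite bracketN mul0r mulr0 add0r big1 // => l _.
  by rewrite (_ : Negz p - 1 = Negz p.+1) ?bracketN ?scaler0 //; lia.
rewrite bracketE -scalerAr dup_mul_Tsum; last lia.
rewrite scalerDr -scalerAl; congr (_ + _); case: p Pm => [|p] Pm.
  rewrite scale0r scaler0 big1 // => l _.
  by rewrite (_ : Posz 0 - 1 = Negz 0) // bracketN scaler0.
rewrite scalerA bracket_coefSp scaler_sumr; apply: eq_bigr => l _.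
by rewrite (_ : Posz p.+1 - 1 = Posz p) ?bracketE ?scalerA 1?mulrC //; lia.
Qed.

Lemma bracket_rec m a (P : int) q t (i : 'I_m.+1 -> 'I_n) :
  (q <= 1)%N -> P + (2 * a + q + t)%N = m.+1 ->
  B a P q t i =
  x (i ord0) * B a (P - 1) q t (fun k => i (lift ord0 k)) +
  q%:R *: (g (i ord0) * B a P 0 t (fun k => i (lift ord0 k))) +
  (0 < t)%N%:R *: (B a P q t.-1 (fun k => i (lift ord0 k)) * D (i ord0)) +
  (0 < a)%N%:R *: \sum_(l < m) eta (i ord0) (i (lift ord0 l)) *:
      B a.-1 P q t (fun k => i (lift ord0 (lift l k))).
Proof.
case: P => [p|p] q1 Pm; last first.
  rewrite (_ : Negz p - 1 = Negz p.+1); last lia.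
  rewrite !bracketN !mulr0 !mul0r !scaler0 !add0r big1 ?scaler0 // => l _.
  by rewrite bracketN scaler0.
rewrite bracketE Tsum_rec //; last lia.
rewrite !scalerDr; congr (_ + _ + _ + _).
- case: p Pm => [|p] Pm.
    by rewrite scale0r scaler0 (_ : Posz 0 - 1 = Negz 0) // bracketN mulr0.
  rewrite (_ : Posz p.+1 - 1 = Posz p); last lia.
  by rewrite bracketE scalerA bracket_coefSp -scalerAr.
- by rewrite bracketE scalerA mulrC -scalerA scalerAr.
- case: t Pm => [|t] Pm; first by rewrite !scale0r scaler0.
  by rewrite scale1r bracketE scalerA bracket_coefSt -scalerAl.
case: a Pm => [|a] Pm; first by rewrite !scale0r scaler0.
rewrite scale1r scalerA bracket_coefSa scaler_sumr; apply: eq_bigr => l _.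
by rewrite bracketE !scalerA mulrC.
Qed.

Lemma bracket_lt0 m a (P : int) q t (i : 'I_m -> 'I_n) : P < 0 -> B a P q t i = 0.
Proof. by case: P. Qed.

Lemma bracket0 (i : 'I_0 -> 'I_n) : B 0 0 0 0 i = 1.
Proof.
rewrite bracketE /Tsum /bracket_coef invr1 scale1r (eq_bigr (fun=> 1)) ?sumr_const ?card_Sn //.
by move=> s _; rewrite (size0nil (size_word i s)) /Tword /= !big_nil scale1r !mulr1.
Qed.

Definition bracket_series m k r (i : 'I_m -> 'I_n) : A :=
  \sum_(t < k.+1) B t (m%:Z - k%:Z - t%:Z - r%:Z) r (k - t) i.

Lemma bracket_series0 k r (i : 'I_0 -> 'I_n) : (r <= 1)%N ->
  bracket_series k r i = ((k == 0%N) && (r == 0%N))%:R.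
Proof.
move=> r1; rewrite /bracket_series.
have [/andP[/eqP-> /eqP->]|kr] := boolP ((k == 0%N) && (r == 0%N)).
  by rewrite big_ord1 subn0 !subr0 bracket0.
rewrite big1 // => t _; apply: bracket_lt0.
by move: kr (ltn_ord t); rewrite negb_and; lia.
Qed.

(* The ∂- and η-terms of [bracket_rec] recombine through [dup_mul_bracket]. *)
Lemma bracket_series_dup m k r (i : 'I_m -> 'I_n) h :
  \sum_(t < k.+1) (0 < k - t)%N%:R *:
      (B t (m.+1%:Z - k%:Z - t%:Z - r%:Z) r (k - t).-1 i * D h) +
  \sum_(t < k.+1) (0 < t)%N%:R *: \sum_(l < m) eta h (i l) *:
      B t.-1 (m.+1%:Z - k%:Z - t%:Z - r%:Z) r (k - t) (fun j => i (lift l j)) =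
  (0 < k)%N%:R *: (D h * bracket_series k.-1 r i).
Proof.
case: k => [|k]; first by rewrite !big_ord1 !scale0r addr0.
rewrite [X in _ + X = _]big_ord_recl big_ord_recr /= subnn !scale0r addr0 add0r scale1r.
rewrite /bracket_series mulr_sumr -big_split; apply: eq_bigr => t _ /=.
have tk := ltn_ord t; rewrite dup_mul_bracket /bump /=; last lia.
rewrite subn_gt0 tk scale1r (_ : (k.+1 - t).-1 = k - t)%N; last lia.
rewrite (_ : m.+1%:Z - k.+1%:Z - t%:Z - r%:Z = m%:Z - k%:Z - t%:Z - r%:Z); last lia.
rewrite add0n add1n subSS scale1r; congr (_ + _); apply: eq_bigr => l _.
by rewrite (_ : _ - (1 + t)%:Z - r%:Z = m%:Z - k%:Z - t%:Z - r%:Z - 1) //; lia.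
Qed.

Lemma bracket_series_rec m k r (i : 'I_m.+1 -> 'I_n) : (r <= 1)%N ->
  bracket_series k r i =
  x (i ord0) * bracket_series k r (fun j => i (lift ord0 j)) +
  r%:R *: (g (i ord0) * bracket_series k 0 (fun j => i (lift ord0 j))) +
  (0 < k)%N%:R *: (D (i ord0) * bracket_series k.-1 r (fun j => i (lift ord0 j))).
Proof.
move=> r1; rewrite -bracket_series_dup {1}/bracket_series.
under eq_bigr => t _ do [rewrite bracket_rec //; last by have := ltn_ord t; lia].
rewrite !big_split /= -!addrA; congr (_ + (_ + _)).
  rewrite mulr_sumr; apply: eq_bigr => t _.
  by rewrite (_ : _ - r%:Z - 1 = m%:Z - k%:Z - t%:Z - r%:Z) //; lia.
case: r r1 => [|[|]] // _; first by rewrite scale0r big1 // => t _; rewrite scale0r.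
rewrite scale1r mulr_sumr; apply: eq_bigr => t _; rewrite scale1r.
by rewrite (_ : _ - 1%:Z = m%:Z - k%:Z - t%:Z - 0%:Z) //; lia.
Qed.

(** * The operator ad(X) *)

Local Notation X := (Xop d g).
Local Notation ad := (adX d g).
Local Notation adn := (adXn d g).
Local Notation c := (cX C).

Lemma Xop_x_comm h : X * x h = x h * X + c *: g h.
Proof.
have -> : g h = \sum_(i < n) g i * (i == h)%:R.
  by rewrite (bigD1 h) //= eqxx mulr1 big1 ?addr0 // => i /negPf ->; rewrite mulr0.
rewrite /Xop -scalerAl -scalerAr -scalerDr mulr_suml mulr_sumr -big_split.
congr (_ *: _); apply: eq_bigr => i _ /=.
by rewrite -mulrA -dx_comm mulrBr addrC !mulrA gx_comm subrK.
Qed.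

Lemma Xop_dup_comm j : X * D j = D j * X.
Proof.
rewrite /Xop -scalerAl -scalerAr mulr_suml mulr_sumr; congr (_ *: _).
apply: eq_bigr => i _; rewrite /dup mulr_sumr mulr_suml; apply: eq_bigr => k _.
by rewrite -scalerAr -scalerAl -mulrA d_comm !mulrA gd_comm.
Qed.

Lemma Xop_g_anticomm h : X * g h + g h * X = (2 * c) *: D h.
Proof.
rewrite /Xop; move: (cX C) => a.
rewrite -scalerAl -scalerAr -scalerDr [in RHS]mulrC -scalerA; congr (_ *: _).
rewrite mulr_suml mulr_sumr -big_split /dup scaler_sumr; apply: eq_bigr => i _ /=.
rewrite -mulrA -gd_comm !mulrA -mulrDl gg_anticomm eta_sym -scalerAl mul1r.
by rewrite scalerA mulrC.
Qed.

Lemma adXD pb u v : ad pb (u + v) = ad pb u + ad pb v.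
Proof.
by rewrite /adX; move: X ((-1) ^+ pb) => Y s; rewrite !mulrDr !mulrDl opprD addrACA.
Qed.

Lemma adXN pb u : ad pb (- u) = - ad pb u.
Proof. by rewrite /adX; move: X ((-1) ^+ pb) => Y s; rewrite !mulrN mulNr opprD. Qed.

Lemma adXZ pb a u : ad pb (a *: u) = a *: ad pb u.
Proof.
by rewrite /adX; move: X ((-1) ^+ pb) => Y s; rewrite -!scalerAr -scalerAl -scalerBr.
Qed.

Lemma adX_x_mul pb h u : ad pb (x h * u) = x h * ad pb u + c *: (g h * u).
Proof.
rewrite /adX mulrA Xop_x_comm mulrDl -scalerAl mulrBr addrAC; congr (_ + _).
by rewrite !mulrA (commr_sign (x h)).
Qed.

Lemma adX_dup_mul pb h u : ad pb (D h * u) = D h * ad pb u.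
Proof. by rewrite /adX mulrA Xop_dup_comm mulrBr !mulrA (commr_sign (D h)). Qed.

Lemma adX_g_mul pb h u : ad pb (g h * u) = (2 * c) *: (D h * u) - g h * ad (~~ pb) u.
Proof.
rewrite /adX scalerAl -Xop_g_anticomm mulrDl mulrBr !mulrA -(commr_sign (g h)).
have -> : (-1) ^+ (~~ pb) = - (-1) ^+ pb :> A by case: pb; rewrite ?opprK.
by rewrite mulrN !mulNr opprK addrKA.
Qed.

Lemma adXnS N pb u : adn N.+1 pb u = ad (pb (+) odd N) (adn N pb u).
Proof. by []. Qed.

Lemma adXn_x_mul h u N :
  adn N false (x h * u) = x h * adn N false u +
    (odd N)%:R *: (c *: (g h * adn N.-1 false u)) -
    (N./2)%:R *: (D h * adn N.-2 false u).
Proof.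
elim: N => [|N IH]; first by rewrite /= !scale0r addr0 subr0.
rewrite adXnS IH /= adXD adXN adXD !adXZ adX_x_mul.
have -> : (odd N)%:R *: (c *: ad (odd N) (g h * adn N.-1 false u)) =
    (odd N)%:R *: (c *: ((2 * c) *: (D h * adn N.-1 false u) - g h * adn N false u)).
  by case: N {IH} => [|N]; rewrite ?scale0r // adX_g_mul adXnS /= negbK.
have -> : (N./2)%:R *: ad (odd N) (D h * adn N.-2 false u) =
    (N./2)%:R *: (D h * adn N.-1 false u).
  by case: N {IH} => [|[|N]]; rewrite ?scale0r // adX_dup_mul adXnS /= negbK.
rewrite uphalf_half; move: (mul2_cX_sqr C); move: (cX C) => a a2.
case: (odd N) => /=; last by rewrite !scale0r addr0 scale1r add0n.
rewrite scale1r scalerBr !scalerA mulrCA -expr2 a2 scaleN1r mul0r scale0r addr0.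
by rewrite natrD scalerDl scale1r opprD [RHS]addrA; congr (_ - _); rewrite addrACA subrr addr0.
Qed.

Lemma adXn_x_mul_parity h u k r : (r <= 1)%N ->
  adn (2 * k + r) false (x h * u) = x h * adn (2 * k + r) false u +
    r%:R *: (c *: (g h * adn (2 * k) false u)) -
    k%:R *: (D h * adn (2 * k.-1 + r) false u).
Proof.
move=> r1; rewrite adXn_x_mul.
have -> : odd (2 * k + r) = r :> nat.
  by case: r r1 => [|[|]] // _; rewrite oddD mul2n odd_double.
have -> : (2 * k + r)./2 = k.
  case: r r1 => [|[|]] // _; rewrite mul2n addnC ?add0n ?doubleK //.
  exact: half_bit_double k true.
congr (_ + _ - _).
  by case: r r1 => [|[|]] // _; rewrite ?scale0r // addn1.
by case: k => [|k]; rewrite ?scale0r // (_ : (2 * k.+1 + r).-2 = 2 * k + r)%N //; lia.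
Qed.

Lemma adXn1 N : (0 < N)%N -> adn N false 1 = 0.
Proof.
case: N => // N _; elim: N => [|N IH]; first by rewrite /= /adX expr0 !mul1r mulr1 subrr.
by rewrite adXnS IH /adX !mulr0 mul0r subrr.
Qed.

Lemma adXn_prod_x m (i : 'I_m -> 'I_n) k r : (r <= 1)%N ->
  adn (2 * k + r) false (\prod_(j < m) x (i j)) =
  ((-1) ^+ k * k`!%:R * c ^+ r) *: bracket_series k r i.
Proof.
elim: m i k r => [|m IH] i k r r1.
  rewrite big_ord0 bracket_series0 //.
  have [/andP[/eqP-> /eqP->]|kr] := boolP ((k == 0%N) && (r == 0%N)).
    by rewrite /= !mul1r scale1r.
  by rewrite adXn1 /= ?mulr0n ?scaler0 //; move: kr; rewrite negb_and; lia.
have IH0 := IH (fun j => i (lift ord0 j)) k 0%N isT; rewrite addn0 in IH0.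
rewrite big_ord_recl adXn_x_mul_parity // {}IH0 !IH // bracket_series_rec //.
rewrite !scalerDr -scaleNr; congr (_ + _ + _); first by rewrite scalerAr.
  case: r r1 => [|[|]] // _; first by rewrite !scale0r scaler0.
  by rewrite -!scalerAr !scalerA; congr (_ *: _); ring.
case: k => [|k]; first by rewrite /= oppr0 !scale0r scaler0.
rewrite -!scalerAr !scalerA; congr (_ *: _).
by rewrite /= factS natrM exprS; ring.
Qed.

End WeylClifford.

Unset Implicit Arguments.

Theorem lemma5p3 (C : numClosedFieldType) (A : algType C) (n : nat)
  (eta : 'M[C]_n) (x d g : 'I_n -> A) :
  (0 < n)%N -> eta^T = eta -> eta \in unitmx ->
  WC_relations eta x d g ->
  forall (m : nat) (i : 'I_m -> 'I_n), (0 < m)%N ->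
  forall (k r : nat), (r <= 1)%N ->
  adXn d g (2 * k + r) false (\prod_(j < m) x (i j)) =
  ((-1) ^+ k * (k`!)%:R * cX C ^+ r) *:
    \sum_(t < k.+1)
      bracket eta x d g t (m%:Z - k%:Z - t%:Z - r%:Z) r (k - t) i.
Proof.
move=> _ etaT _ [[x_comm d_comm dx_comm gx_comm gd_comm] gg_anticomm] m i _ k r r1.
have eta_sym a b : eta a b = eta b a by rewrite -{1}etaT mxE.
exact: (adXn_prod_x eta_sym x_comm d_comm dx_comm gx_comm gd_comm gg_anticomm).
Qed.
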